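(* Let $A$ be a pure hyperbolic isometry and $B$ a pure parabolic isometry of $\mathbb{H}^4$ such that $\mathrm{fix}(A)\cap\mathrm{fix}(B)=\emptyset$. Then $A$ and $B$ are linked.
   Context: A pure hyperbolic isometry is a composition of reflections in two ultra-parallel hyperplanes. A pure parabolic isometry is a composition of reflections in two hyperplanes tangent at a unique point at infinity. $\mathrm{fix}(\cdot)$ denotes the set of fixed points in $\mathbb{H}^4\cup\partial\mathbb{H}^4$. Two isometries $A,B$ are linked if there are involutions $\alpha,\beta,\gamma$ of $\mathbb{H}^4$ with $A=\alpha\beta$ and $B=\beta\gamma$. *)

(* Hyperboloid model of H^4 in R^{4,1}: column vectors 'cV_5,
   coordinate 0 is the time coordinate, Lorentz form -x0 y0 + x1 y1 + ... + x4 y4.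
   Isometries of H^4 = O^+(4,1), acting by x |-> M *m x (so matrix product is
   composition of maps). *)
From HB Require Import structures.
From mathcomp Require Import all_boot all_order all_algebra.
From mathcomp Require Import reals.
Set Implicit Arguments. Unset Strict Implicit. Unset Printing Implicit Defensive.
Import Order.TTheory GRing.Theory Num.Theory.
Local Open Scope ring_scope.

Section H4.
Variable R : realType.

Definition LJ : 'M[R]_5 := diag_mx (\row_(i < 5) (if i == ord0 then -1 else 1)).

Definition lform (x y : 'cV[R]_5) : R := (x^T *m LJ *m y) ord0 ord0.

Definition hpoint (x : 'cV[R]_5) : Prop := lform x x = -1 /\ 0 < x ord0 ord0.

(* representatives of points of the boundary dH^4: future-pointing nonzero null
   vectors; two represent the same ideal point iff positively proportional *)
Definition ideal (v : 'cV[R]_5) : Prop := lform v v = 0 /\ 0 < v ord0 ord0.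
Definition same_ideal (v w : 'cV[R]_5) : Prop := exists l : R, 0 < l /\ w = l *: v.

Definition isometry (M : 'M[R]_5) : Prop := M^T *m LJ *m M = LJ /\ 0 < M ord0 ord0.

Definition involution (M : 'M[R]_5) : Prop := isometry M /\ M *m M = 1%:M /\ M <> 1%:M.

Definition spacelike (e : 'cV[R]_5) : Prop := 0 < lform e e.
Definition on_hplane (e x : 'cV[R]_5) : Prop := lform x e = 0.

(* reflection in the hyperplane with normal e: x |-> x - 2<x,e>/<e,e> e *)
Definition refl (e : 'cV[R]_5) : 'M[R]_5 :=
  1%:M - (2 / lform e e) *: (e *m e^T *m LJ).

Definition ultraparallel (e f : 'cV[R]_5) : Prop :=
  spacelike e /\ spacelike f /\
  ~ (exists x, hpoint x /\ on_hplane e x /\ on_hplane f x) /\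
  ~ (exists v, ideal v /\ on_hplane e v /\ on_hplane f v).

Definition tangent_at_infinity (e f : 'cV[R]_5) : Prop :=
  spacelike e /\ spacelike f /\
  ~ (exists x, hpoint x /\ on_hplane e x /\ on_hplane f x) /\
  exists v, ideal v /\ on_hplane e v /\ on_hplane f v /\
    forall w, ideal w -> on_hplane e w -> on_hplane f w -> same_ideal v w.

Definition pure_hyperbolic (A : 'M[R]_5) : Prop :=
  exists e f, ultraparallel e f /\ A = refl e *m refl f.

Definition pure_parabolic (A : 'M[R]_5) : Prop :=
  exists e f, tangent_at_infinity e f /\ A = refl e *m refl f.

Definition fixes_point (M : 'M[R]_5) (x : 'cV[R]_5) : Prop := M *m x = x.
Definition fixes_ideal (M : 'M[R]_5) (v : 'cV[R]_5) : Prop := same_ideal v (M *m v).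

Definition fix_disjoint (A B : 'M[R]_5) : Prop :=
  ~ (exists x, hpoint x /\ fixes_point A x /\ fixes_point B x) /\
  ~ (exists v, ideal v /\ fixes_ideal A v /\ fixes_ideal B v).

Definition linked (A B : 'M[R]_5) : Prop :=
  exists a b c, involution a /\ involution b /\ involution c /\
    A = a *m b /\ B = b *m c.

End H4.

(* Write A = R_e R_f, where the normals e, f span a timelike plane P, and
   B = R_g R_h, where both hyperplanes of B pass through an ideal point w.
   Let x0 be the orthogonal projection of w onto P.  If x0 is null then
   w = x0 lies in P and A fixes the ideal point w, which B fixes too.
   Otherwise x0 is timelike and the middle involution is the reflection b in
   the geodesic through x0 ending at w (it fixes x0 and w and negates their
   orthogonal complement).  Then b = R_k M with k in P orthogonal to x0 and M
   an involution fixing P, so A b = (R_e R_f R_k) M is a product of two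
   commuting involutions, because three reflections with coplanar normals
   compose to a reflection.  Symmetrically B b is an involution, with k the
   vector of span(g, h) orthogonal to x0 and w, and so is b B. *)

From Pilot Require Import Defs.
From HB Require Import structures.
From mathcomp Require Import all_boot all_order all_algebra.
From mathcomp Require Import reals.
From mathcomp Require Import ring lra.
Set Implicit Arguments. Unset Strict Implicit. Unset Printing Implicit Defensive.
Import Order.TTheory GRing.Theory Num.Theory.
Local Open Scope ring_scope.

Section Minkowski.
Variable R : realType.
Implicit Types (x y z t u v w e f g h k : 'cV[R]_5) (M N : 'M[R]_5).

Local Notation i1 := (@Ordinal 5 1 isT).
Local Notation i2 := (@Ordinal 5 2 isT).
Local Notation i3 := (@Ordinal 5 3 isT).
Local Notation i4 := (@Ordinal 5 4 isT).

(** * The Lorentz form *)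

Definition lsign (i : 'I_5) : R := if i == ord0 then -1 else 1.

Lemma lform_sum x y : lform x y = \sum_(i < 5) lsign i * x i ord0 * y i ord0.
Proof.
rewrite /lform /LJ /lsign mul_mx_diag !mxE; apply: eq_bigr => i _; rewrite !mxE; ring.
Qed.

Lemma lformC x y : lform x y = lform y x.
Proof. by rewrite !lform_sum; apply: eq_bigr => i _; ring. Qed.

Lemma lformDl x y z : lform (x + y) z = lform x z + lform y z.
Proof. by rewrite !lform_sum -big_split; apply: eq_bigr => i _; rewrite !mxE /=; ring. Qed.

Lemma lformZl (a : R) x y : lform (a *: x) y = a * lform x y.
Proof. by rewrite !lform_sum mulr_sumr; apply: eq_bigr => i _; rewrite !mxE; ring. Qed.

Lemma lformDr x y z : lform z (x + y) = lform z x + lform z y.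
Proof. by rewrite lformC lformDl !(lformC z). Qed.

Lemma lformZr (a : R) x y : lform y (a *: x) = a * lform y x.
Proof. by rewrite lformC lformZl lformC. Qed.

Lemma lformNl x y : lform (- x) y = - lform x y.
Proof. by rewrite -scaleN1r lformZl mulN1r. Qed.

Lemma lformNr x y : lform y (- x) = - lform y x.
Proof. by rewrite -scaleN1r lformZr mulN1r. Qed.

Lemma lformBl x y z : lform (x - y) z = lform x z - lform y z.
Proof. by rewrite lformDl lformNl. Qed.

Lemma lformBr x y z : lform z (x - y) = lform z x - lform z y.
Proof. by rewrite lformDr lformNr. Qed.

Lemma lform0l x : lform 0 x = 0.
Proof. by rewrite -(scale0r 0) lformZl mul0r. Qed.

Lemma lform0r x : lform x 0 = 0.
Proof. by rewrite lformC lform0l. Qed.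

Definition lformE := (lformDl, lformDr, lformZl, lformZr, lformNl, lformNr,
  lformBl, lformBr, lform0l, lform0r).

Definition e0 : 'cV[R]_5 := delta_mx ord0 ord0.

Lemma lform_e0 x : lform e0 x = - x ord0 ord0.
Proof.
rewrite lform_sum (bigD1 ord0) //= big1 => [|i /negbTE i0]; last first.
  by rewrite /e0 mxE i0 mulr0 mul0r.
by rewrite /e0 /lsign !mxE eqxx /=; ring.
Qed.

Lemma lform_e0e0 : lform e0 e0 = -1.
Proof. by rewrite lform_e0 /e0 mxE. Qed.

Lemma time_coord_eq0 z : z ord0 ord0 = 0 -> lform z z <= 0 -> z = 0.
Proof.
move=> z0 zz; have sq_eq i : lsign i * z i ord0 * z i ord0 = z i ord0 ^+ 2.
  by rewrite /lsign; case: eqP => [->|_]; rewrite ?z0; ring.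
have sum0 : \sum_(i < 5) z i ord0 ^+ 2 = 0.
  apply/eqP; rewrite eq_le sumr_ge0 ?andbT => [|i _]; last exact: sqr_ge0.
  by rewrite -(eq_bigr _ (fun i _ => sq_eq i)) -lform_sum.
apply/matrixP => i j; rewrite (ord1 j) mxE; apply/eqP; rewrite -sqrf_eq0.
by apply/eqP; apply: (psumr_eq0P (fun i _ => sqr_ge0 _) sum0).
Qed.

Lemma timelike_time_coord_neq0 t : lform t t < 0 -> t ord0 ord0 != 0.
Proof.
move=> tt; apply/eqP => /time_coord_eq0 /(_ (ltW tt)) t0.
by move: tt; rewrite t0 lform0l ltxx.
Qed.

Lemma lform_coord x y : lform x y = - (x ord0 ord0 * y ord0 ord0) +
  (x i1 ord0 * y i1 ord0 + x i2 ord0 * y i2 ord0 + x i3 ord0 * y i3 ord0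
   + x i4 ord0 * y i4 ord0).
Proof.
rewrite lform_sum !big_ord_recl big_ord0 /lsign /=.
have -> : lift ord0 ord0 = i1 :> 'I_5 by apply: val_inj.
have -> : lift ord0 (lift ord0 ord0) = i2 :> 'I_5 by apply: val_inj.
have -> : lift ord0 (lift ord0 (lift ord0 ord0)) = i3 :> 'I_5 by apply: val_inj.
have -> : lift ord0 (lift ord0 (lift ord0 (lift ord0 ord0))) = i4 :> 'I_5.
  by apply: val_inj.
ring.
Qed.

Lemma cauchy_schwarz4 (a1 a2 a3 a4 b1 b2 b3 b4 : R) :
  (a1 * b1 + a2 * b2 + a3 * b3 + a4 * b4) ^+ 2 <=
  (a1 ^+ 2 + a2 ^+ 2 + a3 ^+ 2 + a4 ^+ 2) * (b1 ^+ 2 + b2 ^+ 2 + b3 ^+ 2 + b4 ^+ 2).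
Proof.
rewrite -subr_ge0.
have -> : (a1 ^+ 2 + a2 ^+ 2 + a3 ^+ 2 + a4 ^+ 2) * (b1 ^+ 2 + b2 ^+ 2 + b3 ^+ 2 + b4 ^+ 2)
  - (a1 * b1 + a2 * b2 + a3 * b3 + a4 * b4) ^+ 2 =
  (a1 * b2 - a2 * b1) ^+ 2 + (a1 * b3 - a3 * b1) ^+ 2 + (a1 * b4 - a4 * b1) ^+ 2
  + (a2 * b3 - a3 * b2) ^+ 2 + (a2 * b4 - a4 * b2) ^+ 2 + (a3 * b4 - a4 * b3) ^+ 2.
  by ring.
by rewrite !addr_ge0 ?sqr_ge0.
Qed.

Lemma dominated_lt0E (a b S U V : R) : a != 0 -> S ^+ 2 <= U * V ->
  0 <= V -> U <= a ^+ 2 -> V < b ^+ 2 -> (- (a * b) + S < 0) = (0 < a * b).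
Proof.
move=> a0 SUV V0 Ua Vb.
have a2 : 0 < a ^+ 2 by rewrite exprn_even_gt0.
have key : S ^+ 2 < (a * b) ^+ 2.
  have : U * V <= a ^+ 2 * V by apply: ler_wpM2r.
  have : a ^+ 2 * V < a ^+ 2 * b ^+ 2 by rewrite ltr_pM2l.
  rewrite exprMn; lra.
apply/idP/idP => H; nra.
Qed.

(* Reverse Cauchy-Schwarz: for causal u and timelike v the spatial part of
   <u, v> is dominated by the product of the time coordinates. *)
Lemma causal_lform_lt0 u v : lform u u <= 0 -> u ord0 ord0 != 0 ->
  lform v v < 0 -> (lform u v < 0) = (0 < u ord0 ord0 * v ord0 ord0).
Proof.
rewrite !lform_coord => uu u0 vv.
apply: (dominated_lt0E u0 (cauchy_schwarz4 _ _ _ _ _ _ _ _)).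
- by rewrite !addr_ge0 ?sqr_ge0.
- by rewrite !expr2; lra.
- by rewrite !expr2; lra.
Qed.

Lemma lform_gt0_orth_timelike z t :
  lform t t < 0 -> lform z t = 0 -> z != 0 -> 0 < lform z z.
Proof.
move=> tt zt nz; rewrite ltNge; apply/negP => zz.
have z0 : z ord0 ord0 != 0.
  by apply: contra nz => /eqP z0; apply/eqP; apply: time_coord_eq0.
have t0 := timelike_time_coord_neq0 tt.
have := causal_lform_lt0 zz z0 tt.
have := @causal_lform_lt0 (- z) t; rewrite !lformE opprK mxE oppr_eq0 zt.
rewrite oppr0 ltxx mulNr oppr_gt0 => /(_ zz z0 tt) /esym/negbT.
rewrite -leNgt => ge0 /esym/negbT; rewrite -leNgt => le0.
by move/eqP: (mulf_neq0 z0 t0); apply; apply/eqP; rewrite eq_le le0.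
Qed.

(** * Lorentz transformations *)

Definition lorentzian M := M^T *m LJ R *m M = LJ R.

Lemma lform_mulmx M y z :
  lform (M *m y) (M *m z) = (y^T *m (M^T *m LJ R *m M) *m z) ord0 ord0.
Proof. by rewrite /lform trmx_mul !mulmxA. Qed.

Lemma lorentzian_lform M y z : lorentzian M -> lform (M *m y) (M *m z) = lform y z.
Proof. by move=> LM; rewrite lform_mulmx LM. Qed.

Lemma lorentzianP M :
  (forall y z, lform (M *m y) (M *m z) = lform y z) -> lorentzian M.
Proof.
move=> H; apply/matrixP => i j.
have := H (delta_mx i ord0) (delta_mx j ord0).
by rewrite lform_mulmx /lform !trmx_delta -!rowE -!colE !mxE.
Qed.

Lemma lorentzian_mul M N : lorentzian M -> lorentzian N -> lorentzian (M *m N).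
Proof.
by move=> LM LN; apply: lorentzianP => y z; rewrite -!mulmxA !lorentzian_lform.
Qed.

Lemma LJ_tr : (LJ R)^T = LJ R.
Proof. exact: tr_diag_mx. Qed.

Lemma LJ_sq : LJ R *m LJ R = 1%:M.
Proof.
rewrite /LJ mulmx_diag; apply/matrixP => i j; rewrite !mxE.
by case: (i == j); case: (i == ord0); rewrite ?mulr1n ?mulr0n //; ring.
Qed.

Lemma lorentzian_tr M : lorentzian M -> M *m LJ R *m M^T = LJ R.
Proof.
move=> LM; have inv : (LJ R *m M^T *m LJ R) *m M = 1%:M.
  by rewrite -!mulmxA (mulmxA M^T) LM LJ_sq.
have := mulmx1C inv; rewrite !mulmxA => H.
by rewrite -[LHS]mulmx1 -LJ_sq mulmxA H mul1mx.
Qed.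

Lemma mulmx_e0 M i : (M *m e0) i ord0 = M i ord0.
Proof. by rewrite /e0 -colE mxE. Qed.

Lemma e0_form M : (e0^T *m M *m e0) ord0 ord0 = M ord0 ord0.
Proof. by rewrite /e0 trmx_delta -rowE -colE !mxE. Qed.

Lemma lform_LJl x y : lform (LJ R *m x) y = (x^T *m y) ord0 ord0.
Proof. by rewrite /lform trmx_mul LJ_tr -(mulmxA x^T) LJ_sq mulmx1. Qed.

(* The time coordinate of [M *m N] is, up to sign, the Lorentz product of two
   future timelike vectors: [N *m e0] and [- LJ *m M^T *m e0]. *)
Lemma isometry_mul M N : Defs.isometry M -> Defs.isometry N -> Defs.isometry (M *m N).
Proof.
move=> [LM M0] [LN N0]; split; first exact: lorentzian_mul.
set u := - (LJ R *m (M^T *m e0)).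
have uu : lform u u = -1.
  rewrite lformNl lformNr opprK lform_LJl trmx_mul trmxK.
  have -> : e0^T *m M *m (LJ R *m (M^T *m e0)) = e0^T *m (M *m LJ R *m M^T) *m e0.
    by rewrite !mulmxA.
  by rewrite lorentzian_tr // e0_form /LJ !mxE eqxx.
have u0 : u ord0 ord0 = M ord0 ord0.
  by rewrite /u /LJ mul_diag_mx mxE mxE mxE eqxx mulmx_e0 mxE mulN1r opprK.
have vv : lform (N *m e0) (N *m e0) = -1 by rewrite lorentzian_lform // lform_e0e0.
have := @causal_lform_lt0 u (N *m e0); rewrite uu vv u0 mulmx_e0 mulr_gt0 //.
rewrite lformNl lform_LJl trmx_mul trmxK mulmxA -(mulmxA e0^T M N) e0_form.
by move=> /(_ (lerN10 _) (lt0r_neq0 M0) (ltrN10 _)); rewrite oppr_lt0.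
Qed.

Lemma lorentzian_fix_timelike M t :
  lorentzian M -> M *m t = t -> lform t t < 0 -> Defs.isometry M.
Proof.
move=> LM Mt tt; split=> //.
have ss : lform (M *m e0) (M *m e0) = -1 by rewrite lorentzian_lform // lform_e0e0.
have M0 : M ord0 ord0 != 0.
  by rewrite -mulmx_e0; apply: timelike_time_coord_neq0; rewrite ss ltrN10.
have st : lform (M *m e0) t = - t ord0 ord0.
  by rewrite -{1}Mt lorentzian_lform // lform_e0.
have := @causal_lform_lt0 (M *m e0) t; rewrite ss st mulmx_e0 oppr_lt0.
move=> /(_ (lerN10 _) M0 tt).
case: (ltrgtP (t ord0 ord0) 0) (timelike_time_coord_neq0 tt) => // [tn|tp] _.
- rewrite nmulr_lgt0 // => /esym/negbT.
  by rewrite -leNgt lt_neqAle eq_sym M0.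
- by rewrite pmulr_lgt0 // => <-.
Qed.

Lemma lorentzianN M : lorentzian M -> lorentzian (- M).
Proof.
rewrite /lorentzian; have -> : (- M)^T = - M^T by apply/matrixP => i j; rewrite !mxE.
by rewrite mulNmx mulmxN mulNmx opprK.
Qed.

Lemma comm_involutive_mul M N : comm_mx M N ->
  M *m M = 1%:M -> N *m N = 1%:M -> (M *m N) *m (M *m N) = 1%:M.
Proof.
move=> MN MM NN.
by rewrite -mulmxA (mulmxA N) -MN -mulmxA NN mulmx1 MM.
Qed.

Lemma involutive_mulC M N : M *m M = 1%:M ->
  (N *m M) *m (N *m M) = 1%:M -> (M *m N) *m (M *m N) = 1%:M.
Proof.
move=> MM NMNM.
have -> : M *m N *m (M *m N) = M *m ((N *m M) *m (N *m M)) *m M.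
  by rewrite -[LHS]mulmx1 -MM !mulmxA.
by rewrite NMNM mulmx1 MM.
Qed.

Lemma mx_ext M N : (forall y, M *m y = N *m y) -> M = N.
Proof.
move=> MN; apply/matrixP => i j.
have := congr1 (fun v : 'cV[R]_5 => v i ord0) (MN (delta_mx j ord0)).
by rewrite -!colE !mxE.
Qed.

(** * Orthogonal projections and reflections *)

Definition orth u y := y - (lform u y / lform u u) *: u.

Lemma lform_orth u y : lform u u != 0 -> lform u (orth u y) = 0.
Proof. by move=> uu; rewrite /orth !lformE; field. Qed.

Lemma lform_orthr z u y : lform z u = 0 -> lform z (orth u y) = lform z y.
Proof. by move=> zu; rewrite /orth !lformE zu mulr0 subr0. Qed.

Lemma lform_orth_orth u y : lform u u != 0 ->
  lform (orth u y) (orth u y) = lform y y - lform u y ^+ 2 / lform u u.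
Proof. by move=> uu; rewrite /orth !lformE (lformC y u); field. Qed.

Lemma timelike_orth u y : 0 < lform u u -> lform y y < 0 ->
  lform (orth u y) (orth u y) < 0.
Proof.
move=> uu yy; rewrite lform_orth_orth ?gt_eqF //.
by rewrite ltrBlDr (lt_le_trans yy) // lerDl divr_ge0 ?sqr_ge0 ?ltW.
Qed.

Lemma refl_mulmx e y : refl e *m y = y - (2 * lform e y / lform e e) *: e.
Proof.
rewrite /refl mulmxBl mul1mx -scalemxAl -!mulmxA (mulmxA e^T) [_ *m y]mx11_scalar.
by rewrite mul_mx_scalar scalerA mulrAC.
Qed.

Lemma refl_null e : lform e e = 0 -> refl e = 1%:M.
Proof. by move=> ee; rewrite /refl ee invr0 mulr0 scale0r subr0. Qed.

Lemma refl_orth e y : lform e y = 0 -> refl e *m y = y.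
Proof. by move=> ey; rewrite refl_mulmx ey mulr0 mul0r scale0r subr0. Qed.

Lemma refl_self e : lform e e != 0 -> refl e *m e = - e.
Proof.
move=> ee; rewrite refl_mulmx mulfK //; apply/matrixP => i j.
by rewrite !mxE; ring.
Qed.

Lemma refl_lorentzian e : lorentzian (refl e).
Proof.
have [ee|ee] := eqVneq (lform e e) 0.
  by rewrite refl_null // /lorentzian trmx1 mul1mx mulmx1.
by apply: lorentzianP => y z; rewrite !refl_mulmx !lformE !(lformC _ e); field.
Qed.

Lemma refl_involutive e : refl e *m refl e = 1%:M.
Proof.
have [ee|ee] := eqVneq (lform e e) 0; first by rewrite refl_null // mulmx1.
apply: mx_ext => y; rewrite mul1mx -mulmxA !refl_mulmx !lformE.
by apply/matrixP => i j; rewrite !mxE; field.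
Qed.

Lemma refl_isometry e : spacelike e -> Defs.isometry (refl e).
Proof.
move=> ee; apply: (@lorentzian_fix_timelike _ (orth e e0)).
- exact: refl_lorentzian.
- by rewrite refl_orth // lform_orth // gt_eqF.
- by rewrite timelike_orth // lform_e0e0 ltrN10.
Qed.

Lemma lorentzian_refl_commute M k (s : R) : lorentzian M -> s ^+ 2 = 1 ->
  M *m k = s *: k -> comm_mx M (refl k).
Proof.
move=> LM s2 Mk; apply: mx_ext => y; rewrite -!mulmxA !refl_mulmx.
have kMy : lform k (M *m y) = s * lform k y.
  by rewrite -[LHS]mul1r -s2 expr2 -mulrA -lformZl -Mk lorentzian_lform.
by rewrite mulmxBr -scalemxAr Mk kMy scalerA; congr (_ - _ *: _); ring.
Qed.

Lemma refl3_reverse e f k (a b : R) : k = a *: e + b *: f ->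
  lform e e != 0 -> lform f f != 0 -> lform k k != 0 ->
  refl e *m refl f *m refl k = refl k *m refl f *m refl e.
Proof.
move=> -> ee ff; rewrite !lformE (lformC f e) => kk.
apply: mx_ext => y; rewrite -!mulmxA !refl_mulmx !lformE !(lformC f e).
by apply/matrixP => i j; rewrite !mxE; field; rewrite kk ff ee.
Qed.

(* Three reflections in hyperplanes whose normals span a plane compose to a
   reflection. *)
Lemma refl3_involutive e f k (a b : R) : k = a *: e + b *: f ->
  lform e e != 0 -> lform f f != 0 -> lform k k != 0 ->
  let N := refl e *m refl f *m refl k in N *m N = 1%:M.
Proof.
move=> kef ee ff kk N; rewrite {2}/N (refl3_reverse kef) // /N.
rewrite -!mulmxA (mulmxA (refl k)) refl_involutive mul1mx.
by rewrite (mulmxA (refl f)) refl_involutive mul1mx refl_involutive.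
Qed.

Lemma lform_refl_self e y : lform e e != 0 -> lform e (refl e *m y) = - lform e y.
Proof. by move=> ee; rewrite refl_mulmx !lformE; field. Qed.

Lemma lform_refl_pair_degenerate g h : lform g g != 0 -> lform h h != 0 ->
  lform g h ^+ 2 = lform g g * lform h h ->
  lform g (refl g *m refl h *m g) = lform g g.
Proof.
move=> gg hh gh; rewrite -mulmxA lform_refl_self // refl_mulmx lformBr lformZr.
have -> : 2 * lform h g / lform h h * lform g h = 2 * (lform g h ^+ 2 / lform h h).
  by rewrite (lformC h g); ring.
by rewrite gh mulfK //; ring.
Qed.

(* [refl e *m refl f *m b = (refl e *m refl f *m refl k) *m (refl k *m b)]
   is a product of two commuting involutions. *)
Lemma refl_pair_mul_involutive e f k b (a c : R) : k = a *: e + c *: f ->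
  lform e e != 0 -> lform f f != 0 -> lform k k != 0 ->
  lorentzian b -> b *m b = 1%:M -> b *m k = - k ->
  refl k *m b *m e = e -> refl k *m b *m f = f ->
  (refl e *m refl f *m b) *m (refl e *m refl f *m b) = 1%:M.
Proof.
move=> kE ee ff kk Lb bb bk Me Mf; set M := refl k *m b in Me Mf.
have bRk : comm_mx b (refl k).
  by apply: (lorentzian_refl_commute (s := -1)); rewrite ?sqrrN ?expr1n ?scaleN1r.
have LM : lorentzian M := lorentzian_mul (refl_lorentzian k) Lb.
have Mk : M *m k = k by rewrite -mulmxA bk mulmxN refl_self ?opprK.
have MR v : M *m v = v -> comm_mx M (refl v).
  by move=> Mv; apply: (lorentzian_refl_commute (s := 1)); rewrite ?expr1n ?scale1r.
have -> : refl e *m refl f *m b = refl e *m refl f *m refl k *m M.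
  by rewrite /M -!mulmxA (mulmxA (refl k)) refl_involutive mul1mx.
apply: comm_involutive_mul; first by apply/comm_mx_sym/comm_mxM; [apply: comm_mxM|]; apply: MR.
  exact: (refl3_involutive kE).
by apply: comm_involutive_mul; [apply: comm_mx_sym | exact: refl_involutive |].
Qed.

(** * Pairs of hyperplanes *)

Lemma sg_time_coord u : u ord0 ord0 != 0 ->
  Num.sg (u ord0 ord0) ^+ 2 = 1 /\ 0 < (Num.sg (u ord0 ord0) *: u) ord0 ord0.
Proof. by move=> u0; rewrite sqr_sg u0 mxE -normrEsg normr_gt0. Qed.

Lemma common_hpoint_of_timelike e f t : lform t t < 0 ->
  lform t e = 0 -> lform t f = 0 ->
  exists x, hpoint x /\ on_hplane e x /\ on_hplane f x.
Proof.
move=> tt te tf; have [sg2 sgt] := sg_time_coord (timelike_time_coord_neq0 tt).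
set c := Num.sqrt (- lform t t).
have c0 : 0 < c by rewrite sqrtr_gt0 oppr_gt0.
have c2 : c ^+ 2 = - lform t t by rewrite sqr_sqrtr // oppr_ge0 ltW.
exists ((Num.sg (t ord0 ord0) / c) *: t); split; last first.
  by rewrite /on_hplane !lformZl te tf mulr0.
split; last by move: sgt; rewrite !mxE mulrAC => ?; apply: divr_gt0.
rewrite !lformE mulrA -expr2 expr_div_n sg2 c2.
by field; rewrite lt_eqF.
Qed.

Lemma common_ideal_of_null e f u : lform u u = 0 -> u != 0 ->
  lform u e = 0 -> lform u f = 0 ->
  exists v, ideal v /\ on_hplane e v /\ on_hplane f v.
Proof.
move=> uu nu ue uf.
have u0 : u ord0 ord0 != 0.
  by apply: contra nu => /eqP u0; apply/eqP; apply: time_coord_eq0; rewrite ?uu.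
have [_ sgu] := sg_time_coord u0.
exists (Num.sg (u ord0 ord0) *: u).
by rewrite /ideal /on_hplane !lformE uu ue uf !mulr0.
Qed.

Lemma orth_decomp e f : f = orth e f + (lform e f / lform e e) *: e.
Proof. by rewrite subrK. Qed.

Lemma lform_orth_decomp e f : 0 < lform e e ->
  lform (orth e f) e = 0 /\ lform (orth e f) f = lform (orth e f) (orth e f).
Proof.
move=> ee; have ue : lform (orth e f) e = 0 by rewrite lformC lform_orth ?gt_eqF.
split=> //; set u := orth e f.
by rewrite [f in lform u f](orth_decomp e) -/u lformDr lformZr ue mulr0 addr0.
Qed.

(* If [orth e f] vanished or were spacelike, projecting [e0] away from [e] and
   then from [orth e f] would give a common timelike normal. *)
Lemma orth_causal_of_no_common_hpoint e f : spacelike e ->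
  ~ (exists x, hpoint x /\ on_hplane e x /\ on_hplane f x) ->
  orth e f != 0 /\ lform (orth e f) (orth e f) <= 0.
Proof.
move=> ee nohp; set u := orth e f; have [ue _] := lform_orth_decomp f ee.
have t1e : lform (orth e e0) e = 0 by rewrite lformC lform_orth ?gt_eqF.
have t1t1 : lform (orth e e0) (orth e e0) < 0.
  by rewrite timelike_orth // lform_e0e0 ltrN10.
split.
  apply/negP => /eqP u0; apply: nohp; apply: (common_hpoint_of_timelike t1t1 t1e).
  by rewrite [f](orth_decomp e) -/u u0 add0r lformZr t1e mulr0.
rewrite leNgt; apply/negP => uu; apply: nohp.
set t := orth u (orth e e0).
have tu : lform t u = 0 by rewrite lformC lform_orth ?gt_eqF.
have te : lform t e = 0 by rewrite lformC lform_orthr ?(lformC e) // lformC.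
apply: (common_hpoint_of_timelike (timelike_orth _ t1t1) te) => //.
by rewrite [f](orth_decomp e) -/u lformDr lformZr tu te mulr0 addr0.
Qed.

Lemma ultraparallel_orth_timelike e f :
  ultraparallel e f -> lform (orth e f) (orth e f) < 0.
Proof.
move=> [ee [_ [nohp noid]]]; have [u0 uu] := orth_causal_of_no_common_hpoint ee nohp.
have [ue uf] := lform_orth_decomp f ee.
rewrite lt_neqAle uu andbT; apply/eqP => uu0; apply: noid.
by apply: (common_ideal_of_null uu0 u0 ue); rewrite uf.
Qed.

Lemma tangent_normal_form g h : tangent_at_infinity g h ->
  exists w (s c : R), ideal w /\ s ^+ 2 = 1 /\
    lform w g = 0 /\ lform w h = 0 /\ h = s *: w + c *: g.
Proof.
move=> [gg [_ [nohp [v [[vv v0] [vg [vh _]]]]]]].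
have [u0 uu] := orth_causal_of_no_common_hpoint gg nohp.
have [ug uh] := lform_orth_decomp h gg; set u := orth g h in u0 uu ug uh.
have uu0 : lform u u = 0.
  apply/eqP; rewrite eq_le uu leNgt; apply/negP => ut.
  have vu : lform v u = 0 by rewrite /u /orth !lformE vg vh mulr0 subrr.
  suff : v != 0 by move/(lform_gt0_orth_timelike ut vu); rewrite vv ltxx.
  by apply: contraTneq v0 => ->; rewrite mxE ltxx.
have u00 : u ord0 ord0 != 0.
  by apply: contra u0 => /eqP u00; apply/eqP; apply: time_coord_eq0; rewrite ?uu0.
have [s2 su] := sg_time_coord u00.
exists (Num.sg (u ord0 ord0) *: u), (Num.sg (u ord0 ord0)), (lform g h / lform g g).
rewrite /ideal lformZl lformZr !lformZl uu0 ug uh uu0 !mulr0 scalerA -expr2 s2 scale1r.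
by do !split => //; apply: orth_decomp.
Qed.

(* [x0] is the orthogonal projection of [w] onto the plane of [e] and [f],
   computed in its orthogonal basis [e], [orth e f]. *)
Lemma lorentz_plane_proj e f w : 0 < lform e e ->
  lform (orth e f) (orth e f) < 0 -> lform w w = 0 ->
  exists p q : R, let x0 := p *: e + q *: f in
    [/\ lform x0 e = lform w e, lform x0 f = lform w f,
        lform x0 w = lform x0 x0, lform x0 x0 <= 0 & lform x0 x0 = 0 -> w = x0].
Proof.
move=> ee uu ww; have [ue uf] := lform_orth_decomp f ee.
set c := lform e f / lform e e; have fE : f = orth e f + c *: e := orth_decomp e f.
set u := orth e f in uu ue uf fE *; clearbody u.
set a := lform e w / lform e e; set b := lform u w / lform u u.
exists (a - b * c), b => x0.
have x0E : x0 = a *: e + b *: u.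
  by rewrite /x0 fE; apply/matrixP => i j; rewrite !mxE; ring.
clearbody x0.
have x0e : lform x0 e = lform w e.
  by rewrite x0E !lformE ue (lformC w) /a; field; rewrite gt_eqF.
have x0u : lform x0 u = lform w u.
  by rewrite x0E !lformE (lformC e u) ue (lformC w) /b; field; rewrite lt_eqF.
have x0f : lform x0 f = lform w f by rewrite fE !lformE x0e x0u.
set z := w - x0.
have ze : lform z e = 0 by rewrite lformBl x0e subrr.
have zu : lform z u = 0 by rewrite lformBl x0u subrr.
have wE : w = x0 + z by rewrite addrC subrK.
clearbody z; subst w.
have x0z : lform x0 z = 0 by rewrite x0E !lformE !(lformC _ z) ze zu !mulr0 addr0.
have zz : lform z z = - lform x0 x0.
  by move: ww; rewrite !lformE (lformC z x0) x0z; lra.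
rewrite lformDr x0z addr0.
have [z0|z0] := eqVneq z 0.
  subst z; rewrite addr0 in x0e x0f *.
  by split=> //; rewrite -oppr_ge0 -zz lform0l.
have := lform_gt0_orth_timelike uu zu z0; rewrite zz oppr_gt0 => x0x0.
by split=> // [|x0x00]; [apply: ltW | move: x0x0; rewrite x0x00 ltxx].
Qed.

(* The eigenvalue is [p^2 <e,e> / (q^2 <f,f>)]. *)
Lemma refl_pair_null_eigen e f (p q : R) : 0 < lform e e -> 0 < lform f f ->
  let w := p *: e + q *: f in lform w w = 0 -> w != 0 ->
  exists l : R, 0 < l /\ refl e *m refl f *m w = l *: w.
Proof.
move=> ee ff w; rewrite /w !lformE (lformC f e) => ww w0.
have [q0|q0] := eqVneq q 0.
  have /eqP : p ^+ 2 * lform e e = 0 by rewrite -ww q0; ring.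
  rewrite mulf_eq0 (gt_eqF ee) orbF sqrf_eq0 => /eqP p0.
  by move: w0; rewrite p0 q0 !scale0r addr0 eqxx.
have [p0|p0] := eqVneq p 0.
  have /eqP : q ^+ 2 * lform f f = 0 by rewrite -ww p0; ring.
  by rewrite mulf_eq0 (gt_eqF ff) orbF sqrf_eq0 (negbTE q0).
exists (p ^+ 2 * lform e e / (q ^+ 2 * lform f f)).
split; first by rewrite divr_gt0 // mulr_gt0 // exprn_even_gt0.
have fE : lform f f = - (p ^+ 2 * lform e e + 2 * p * q * lform e f) / q ^+ 2.
  have qf : q ^+ 2 * lform f f = - (p ^+ 2 * lform e e + 2 * p * q * lform e f).
    by rewrite -[LHS]subr0 -ww; ring.
  by rewrite -qf; field.
have fE0 := ff; rewrite fE in fE0.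
rewrite -mulmxA !refl_mulmx !lformE (lformC f e) fE.
apply/matrixP => i j; rewrite !mxE; field; rewrite q0 (gt_eqF ee) andbT /=.
by apply: contraTneq fE0 => ->; rewrite oppr0 mul0r ltxx.
Qed.

(** * The middle involution *)

(* For orthogonal [x] and [y] this matrix fixes both and is [-1] on their
   orthogonal complement: for timelike [x] it is the reflection of H^4 in the
   geodesic spanned by [x] and [y]. *)
Definition geodesic_refl x y : 'M[R]_5 := - (refl x *m refl y).

Lemma geodesic_refl_lorentzian x y : lorentzian (geodesic_refl x y).
Proof. exact/lorentzianN/lorentzian_mul/refl_lorentzian/refl_lorentzian. Qed.

Lemma geodesic_refl_involutive x y :
  lform x y = 0 -> geodesic_refl x y *m geodesic_refl x y = 1%:M.
Proof.
move=> xy; rewrite /geodesic_refl mulNmx mulmxN opprK.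
apply: comm_involutive_mul; [|exact: refl_involutive..].
apply: (lorentzian_refl_commute (refl_lorentzian x) (expr1n _ 2)).
by rewrite scale1r refl_orth.
Qed.

Lemma geodesic_refl_fixl x y :
  lform x x != 0 -> lform x y = 0 -> geodesic_refl x y *m x = x.
Proof.
move=> xx xy; rewrite /geodesic_refl mulNmx -mulmxA (@refl_orth y x) 1?lformC //.
by rewrite refl_self // opprK.
Qed.

Lemma geodesic_refl_fixr x y :
  lform y y != 0 -> lform x y = 0 -> geodesic_refl x y *m y = y.
Proof.
by move=> yy xy; rewrite /geodesic_refl mulNmx -mulmxA refl_self // mulmxN refl_orth // opprK.
Qed.

Lemma geodesic_refl_orth x y z :
  lform x z = 0 -> lform y z = 0 -> geodesic_refl x y *m z = - z.
Proof. by move=> xz yz; rewrite /geodesic_refl mulNmx -mulmxA !refl_orth. Qed.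

Section GeodesicThroughIdealPoint.
Variables w x0 : 'cV[R]_5.
Hypotheses (ww : lform w w = 0) (x0x0 : lform x0 x0 < 0)
  (x0w : lform x0 w = lform x0 x0).

Local Notation b := (geodesic_refl x0 (w - x0)).

Let x0y : lform x0 (w - x0) = 0.
Proof. by rewrite lformBr x0w subrr. Qed.

Let yy : lform (w - x0) (w - x0) != 0.
Proof. by rewrite !lformE (lformC w x0) x0w ww subrr addr0 sub0r oppr_eq0 lt_eqF. Qed.

Lemma geodesic_refl_isometry : Defs.isometry b.
Proof.
apply: (lorentzian_fix_timelike (geodesic_refl_lorentzian _ _) _ x0x0).
exact: geodesic_refl_fixl (ltr0_neq0 x0x0) x0y.
Qed.

Lemma geodesic_refl_ideal : b *m w = w.
Proof.
have -> : b *m w = b *m (w - x0) + b *m x0 by rewrite -mulmxDr subrK.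
by rewrite (geodesic_refl_fixl (ltr0_neq0 x0x0) x0y) (geodesic_refl_fixr yy x0y) subrK.
Qed.

Lemma geodesic_refl_normal z : lform x0 z = 0 -> lform w z = 0 -> b *m z = - z.
Proof. by move=> x0z wz; rewrite geodesic_refl_orth // lformBl x0z wz subrr. Qed.

Lemma lorentz_plane_normal e f (p q : R) : 0 < lform e e ->
  x0 = p *: e + q *: f -> lform x0 e = lform w e -> lform x0 f = lform w f ->
  let k := lform x0 f *: e - lform x0 e *: f in
  [/\ lform x0 k = 0, lform w k = 0, 0 < lform k k,
      lform x0 x0 *: e = lform x0 e *: x0 + q *: k &
      lform x0 x0 *: f = lform x0 f *: x0 - p *: k].
Proof.
move=> ee x0E x0e x0f k.
have X0 := ltr0_neq0 x0x0; have XX := x0x0; set X := lform x0 x0 in X0 XX *.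
have x0k : lform x0 k = 0 by rewrite /k !lformE; ring.
have Xpq : X = p * lform x0 e + q * lform x0 f.
  by rewrite /X {1}x0E lformDl !lformZl !(lformC _ x0).
have eE : X *: e = lform x0 e *: x0 + q *: k.
  by rewrite Xpq /k x0E; apply/matrixP => i j; rewrite !mxE; ring.
have k0 : k != 0.
  apply/eqP => k0; move: (congr1 (fun v => lform v v) eE).
  rewrite k0 scaler0 addr0 !lformE -/X => H.
  have /(mulfI X0) : X * (X * lform e e) = X * lform x0 e ^+ 2 by rewrite H; ring.
  by nra.
split=> //.
- by rewrite /k !lformE -x0e -x0f; ring.
- by apply: lform_gt0_orth_timelike x0x0 _ k0; rewrite lformC.
- by rewrite Xpq /k x0E; apply/matrixP => i j; rewrite !mxE; ring.
Qed.

Lemma refl_pair_geodesic_refl_involution e f (p q : R) :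
  spacelike e -> spacelike f -> x0 = p *: e + q *: f ->
  lform x0 e = lform w e -> lform x0 f = lform w f ->
  refl e *m refl f *m w != w -> involution b /\ involution (refl e *m refl f *m b).
Proof.
move=> ee ff x0E x0e x0f Aw; rewrite /spacelike in ee ff.
have X0 := ltr0_neq0 x0x0.
have /= [x0k wk kk eE fE] := lorentz_plane_normal ee x0E x0e x0f.
set k := lform x0 f *: e - lform x0 e *: f in x0k wk kk eE fE.
have bk : b *m k = - k by apply: geodesic_refl_normal.
have Mx0 : refl k *m b *m x0 = x0.
  by rewrite -mulmxA (geodesic_refl_fixl X0 x0y) refl_orth // lformC.
have Mk : refl k *m b *m k = k by rewrite -mulmxA bk mulmxN refl_self ?gt_eqF ?opprK.
have Me : refl k *m b *m e = e.
  by apply: (scalerI X0); rewrite scalemxAr eE mulmxDr -!scalemxAr Mx0 Mk.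
have Mf : refl k *m b *m f = f.
  by apply: (scalerI X0); rewrite scalemxAr fE mulmxBr -!scalemxAr Mx0 Mk.
have b_inv : involution b.
  split; first exact: geodesic_refl_isometry.
  split; first exact: geodesic_refl_involutive.
  by move=> b1; move: bk; rewrite b1 mul1mx => /(congr1 (lform k)); rewrite lformNr; lra.
split=> //; split.
  exact: isometry_mul (isometry_mul (refl_isometry ee) (refl_isometry ff))
    geodesic_refl_isometry.
split.
  apply: (@refl_pair_mul_involutive _ _ k _ (lform x0 f) (- lform x0 e));
    rewrite ?gt_eqF //.
  - by rewrite /k scaleNr.
  - exact: geodesic_refl_lorentzian.
  - exact: geodesic_refl_involutive.
move=> Ab1; move/eqP: Aw; apply.
have -> : refl e *m refl f = b.
  by rewrite -[LHS]mulmx1 -(geodesic_refl_involutive x0y) mulmxA Ab1 mul1mx.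
exact: geodesic_refl_ideal.
Qed.

Lemma tangent_plane_normal g h (s c : R) :
  lform w g = 0 -> h = s *: w + c *: g -> s ^+ 2 = 1 ->
  let a := - lform x0 g / lform x0 x0 in let g' := g + a *: w in
  [/\ lform x0 g' = 0, lform w g' = 0, lform g' g' = lform g g
     & g' = (1 - a * s * c) *: g + (a * s) *: h].
Proof.
move=> wg hE s2 a g'; split.
- by rewrite /g' /a !lformE x0w; field; rewrite ltr0_neq0.
- by rewrite /g' !lformE wg ww mulr0 addr0.
- by rewrite /g' !lformE (lformC g w) wg ww; ring.
- by rewrite /g' hE; apply/matrixP => i j; rewrite !mxE -[a in LHS]mulr1 -{1}s2; ring.
Qed.

Lemma geodesic_refl_refl_pair_involution g h (s c : R) :
  spacelike g -> spacelike h -> lform w g = 0 -> h = s *: w + c *: g ->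
  s ^+ 2 = 1 -> involution (b *m (refl g *m refl h)).
Proof.
move=> gg hh wg hE s2; rewrite /spacelike in gg hh.
have /= [x0g' wg' g'g' g'E] := tangent_plane_normal wg hE s2.
set a := - lform x0 g / lform x0 x0 in x0g' wg' g'g' g'E.
set g' := g + a *: w in x0g' wg' g'g' g'E.
have bg' : b *m g' = - g' by apply: geodesic_refl_normal.
have gE : g = g' - a *: w by rewrite /g' addrK.
have Mg' : refl g' *m b *m g' = g'.
  by rewrite -mulmxA bg' mulmxN refl_self ?g'g' ?gt_eqF ?opprK.
have Mw : refl g' *m b *m w = w.
  by rewrite -mulmxA geodesic_refl_ideal refl_orth // lformC.
have Mg : refl g' *m b *m g = g by rewrite gE mulmxBr -scalemxAr Mg' Mw.
have Mh : refl g' *m b *m h = h by rewrite hE mulmxDr -!scalemxAr Mw Mg.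
split.
  exact: isometry_mul geodesic_refl_isometry
    (isometry_mul (refl_isometry gg) (refl_isometry hh)).
split.
  apply: involutive_mulC; first exact: geodesic_refl_involutive.
  apply: (refl_pair_mul_involutive g'E); rewrite ?g'g' ?gt_eqF //.
  - exact: geodesic_refl_lorentzian.
  - exact: geodesic_refl_involutive.
move=> bB1; have Bb : refl g *m refl h = b.
  by rewrite -[LHS]mul1mx -(geodesic_refl_involutive x0y) -mulmxA bB1 mulmx1.
have gBg : lform g (refl g *m refl h *m g) = lform g g.
  apply: lform_refl_pair_degenerate; rewrite ?gt_eqF //.
  by rewrite hE !lformE (lformC g w) wg ww; ring.
have gbg : lform g (b *m g) = - lform g g.
  rewrite {2}gE mulmxBr -scalemxAr bg' geodesic_refl_ideal /g' !lformE.
  by rewrite (lformC g w) wg; ring.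
by move: gBg; rewrite Bb gbg; lra.
Qed.

Lemma linked_refl_pairs e f g h (p q s c : R) :
  spacelike e -> spacelike f -> spacelike g -> spacelike h ->
  x0 = p *: e + q *: f -> lform x0 e = lform w e -> lform x0 f = lform w f ->
  refl e *m refl f *m w != w ->
  lform w g = 0 -> h = s *: w + c *: g -> s ^+ 2 = 1 ->
  linked (refl e *m refl f) (refl g *m refl h).
Proof.
move=> ee ff gg hh x0E x0e x0f Aw wg hE s2.
have [b_inv Ab_inv] := refl_pair_geodesic_refl_involution ee ff x0E x0e x0f Aw.
exists (refl e *m refl f *m b), b, (b *m (refl g *m refl h)).
split=> //; split=> //; split.
  exact: geodesic_refl_refl_pair_involution gg hh wg hE s2.
by rewrite -mulmxA [b *m (b *m _)]mulmxA geodesic_refl_involutive // mulmx1 mul1mx.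
Qed.

End GeodesicThroughIdealPoint.

End Minkowski.

Unset Implicit Arguments.

Theorem theorem7p3 (R : realType) (A B : 'M[R]_5) :
  pure_hyperbolic A -> pure_parabolic B -> fix_disjoint A B -> linked A B.
Proof.
move=> [e [f [ef ->]]] [g [h [gh ->]]] [_ nofix].
have [ee [ff _]] := ef; have [gg [hh _]] := gh.
have [w [s [c [[ww w0] [s2 [wg [wh hE]]]]]]] := tangent_normal_form gh.
have Bw : fixes_ideal (refl g *m refl h) w.
  by exists 1; rewrite scale1r ltr01 -mulmxA !refl_orth // lformC.
have Aw l : 0 < l -> refl e *m refl f *m w != l *: w.
  by move=> l0; apply/eqP => Aw; apply: nofix; exists w; split=> //; split=> //; exists l.
have [p [q [x0e x0f x0w x0x0 x0w0]]] :=
  lorentz_plane_proj ee (ultraparallel_orth_timelike ef) ww.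
have [X0|X0] := eqVneq (lform (p *: e + q *: f) (p *: e + q *: f)) 0.
  have wE := x0w0 X0; rewrite wE in w0.
  have [|l [l0]] := refl_pair_null_eigen ee ff X0.
    by apply: contraTneq w0 => ->; rewrite mxE ltxx.
  by rewrite -wE => Awl; move/eqP: (Aw l l0).
apply: (linked_refl_pairs ww _ x0w ee ff gg hh erefl x0e x0f _ wg hE s2).
  by rewrite lt_neqAle X0.
by rewrite -[X in _ != X]scale1r Aw.
Qed.
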